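(* If $\mathcal{R}_0<1$, then the disease-free equilibrium $E_0=\left(\frac{\Lambda}{\lambda},\frac{r\Lambda}{\mu\lambda},0,0\right)$ of the model is globally asymptotically stable.
   Context: The model is $\dot S=\Lambda-F_1(S,I_1)-F_2(S,I_2)-\lambda S$, $\dot V_1=rS-(\mu+kI_2)V_1$, $\dot I_1=F_1(S,I_1)-\alpha_1I_1$, $\dot I_2=F_2(S,I_2)+kI_2V_1-\alpha_2I_2$ on $\mathbb{R}^4_+$. The constants $\Lambda,\mu,r,k,\gamma_1,\gamma_2>0$ and $v_1,v_2\ge0$; $\lambda=r+\mu$ and $\alpha_i=\gamma_i+v_i+\mu$. For $i=1,2$ the incidence functions satisfy: - (H1) $F_i(S,I_i)=I_if_i(S,I_i)$ with $F_i,f_i\in C^2(\mathbb{R}^2_+,\mathbb{R}_+)$ and $F_i(0,I_i)=F_i(S,0)=0$; - (H2) $\partial f_i/\partial S>0$ and $\partial f_i/\partial I_i\le0$; - (H3) $\lim_{I_i\to0^+}F_i(S,I_i)/I_i$ exists and is positive for $S>0$. Let $S^0=\Lambda/\lambda$ and $\sigma_i=\frac{\partial F_i}{\partial I_i}(S^0,0)$. Set $\mathcal{R}_1=\sigma_1/\alpha_1$, $\mathcal{R}_2=\sigma_2/\alpha_2+\frac{kr\Lambda}{\alpha_2\mu\lambda}$ and $\mathcal{R}_0=\max\{\mathcal{R}_1,\mathcal{R}_2\}$. *)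

From Stdlib Require Import Reals.
From Coquelicot Require Import Coquelicot.
Open Scope R_scope.

Definition quadrant (p : R * R) : Prop := 0 <= fst p /\ 0 <= snd p.

(** Partial derivatives of G : R^2_+ -> R at a point (x,y) of the closed
    quadrant, taken within the quadrant (one-sided on the boundary). *)
Definition is_dS (G : R -> R -> R) (x y d : R) : Prop :=
  filterlim (fun h => (G (x + h) y - G x y) / h)
    (within (fun h => h <> 0 /\ 0 <= x + h) (locally 0)) (locally d).

Definition is_dI (G : R -> R -> R) (x y d : R) : Prop :=
  filterlim (fun h => (G x (y + h) - G x y) / h)
    (within (fun h => h <> 0 /\ 0 <= y + h) (locally 0)) (locally d).

Definition cont_quadrant (G : R -> R -> R) : Prop :=
  forall x y, 0 <= x -> 0 <= y ->
    filterlim (fun p : R * R => G (fst p) (snd p))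
      (within quadrant (locally (x, y))) (locally (G x y)).

Definition C2_quadrant (G : R -> R -> R) : Prop :=
  exists d1 d2 d11 d12 d21 d22 : R -> R -> R,
    (forall x y, 0 <= x -> 0 <= y ->
       is_dS G x y (d1 x y) /\ is_dI G x y (d2 x y) /\
       is_dS d1 x y (d11 x y) /\ is_dI d1 x y (d12 x y) /\
       is_dS d2 x y (d21 x y) /\ is_dI d2 x y (d22 x y)) /\
    cont_quadrant G /\ cont_quadrant d1 /\ cont_quadrant d2 /\
    cont_quadrant d11 /\ cont_quadrant d12 /\
    cont_quadrant d21 /\ cont_quadrant d22.

Definition H1 (F f : R -> R -> R) : Prop :=
  C2_quadrant F /\ C2_quadrant f /\
  (forall S I, 0 <= S -> 0 <= I ->
     F S I = I * f S I /\ 0 <= F S I /\ 0 <= f S I) /\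
  (forall I, 0 <= I -> F 0 I = 0) /\
  (forall S, 0 <= S -> F S 0 = 0).

Definition H2 (f : R -> R -> R) : Prop :=
  forall S I, 0 <= S -> 0 <= I ->
    (forall d, is_dS f S I d -> 0 < d) /\
    (forall d, is_dI f S I d -> d <= 0).

Definition H3 (F : R -> R -> R) : Prop :=
  forall S, 0 < S ->
    exists L, 0 < L /\
      filterlim (fun I => F S I / I) (at_right 0) (locally L).

Definition is_solution (Lam mu r k gam1 gam2 v1 v2 : R)
    (F1 F2 : R -> R -> R) (S V1 I1 I2 : R -> R) : Prop :=
  let lam := r + mu in
  let a1 := gam1 + v1 + mu in
  let a2 := gam2 + v2 + mu in
  (forall t, 0 <= t ->
     0 <= S t /\ 0 <= V1 t /\ 0 <= I1 t /\ 0 <= I2 t) /\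
  (forall t, 0 < t ->
     is_derive S t (Lam - F1 (S t) (I1 t) - F2 (S t) (I2 t) - lam * S t) /\
     is_derive V1 t (r * S t - (mu + k * I2 t) * V1 t) /\
     is_derive I1 t (F1 (S t) (I1 t) - a1 * I1 t) /\
     is_derive I2 t (F2 (S t) (I2 t) + k * I2 t * V1 t - a2 * I2 t)) /\
  filterlim S (at_right 0) (locally (S 0)) /\
  filterlim V1 (at_right 0) (locally (V1 0)) /\
  filterlim I1 (at_right 0) (locally (I1 0)) /\
  filterlim I2 (at_right 0) (locally (I2 0)).

Definition dist4 (a b c d a' b' c' d' : R) : R :=
  Rmax (Rmax (Rabs (a - a')) (Rabs (b - b'))) (Rmax (Rabs (c - c')) (Rabs (d - d'))).

Definition GAS (Lam mu r k gam1 gam2 v1 v2 : R) (F1 F2 : R -> R -> R)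
    (e1 e2 e3 e4 : R) : Prop :=
  (Lam - F1 e1 e3 - F2 e1 e4 - (r + mu) * e1 = 0 /\
   r * e1 - (mu + k * e4) * e2 = 0 /\
   F1 e1 e3 - (gam1 + v1 + mu) * e3 = 0 /\
   F2 e1 e4 + k * e4 * e2 - (gam2 + v2 + mu) * e4 = 0) /\
  (forall eps, 0 < eps -> exists delta, 0 < delta /\
     forall S V1 I1 I2,
       is_solution Lam mu r k gam1 gam2 v1 v2 F1 F2 S V1 I1 I2 ->
       dist4 (S 0) (V1 0) (I1 0) (I2 0) e1 e2 e3 e4 < delta ->
       forall t, 0 <= t -> dist4 (S t) (V1 t) (I1 t) (I2 t) e1 e2 e3 e4 < eps) /\
  (forall S V1 I1 I2,
     is_solution Lam mu r k gam1 gam2 v1 v2 F1 F2 S V1 I1 I2 ->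
     filterlim S (Rbar_locally p_infty) (locally e1) /\
     filterlim V1 (Rbar_locally p_infty) (locally e2) /\
     filterlim I1 (Rbar_locally p_infty) (locally e3) /\
     filterlim I2 (Rbar_locally p_infty) (locally e4)).

From Stdlib Require Import Reals Lra.
From Coquelicot Require Import Coquelicot.
Open Scope R_scope.

(* Everything rests on comparison with linear differential inequalities:
   if x' <= a - b x on (T, oo) then x t <= a/b + (x T - a/b) exp (-b (t - T)).
   Since S' <= Lam - (r + mu) S, S is eventually below S0 + e, and stays below
   S0 + d when the initial data are d-close to E0; V' <= r S - mu V then bounds
   V by V0 + O(d).  By (H2), f_i S I <= Phi_i := f_i (S0 + eta) 0 as long as
   S <= S0 + eta, and by (H1) sigma_i = f_i S0 0; so R0 < 1 and continuity
   yield an eta with Phi1 < alpha1 and Phi2 + k (V0 + O(eta)) < alpha2, which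
   makes I1 and I2 decay exponentially.  Feeding I_i -> 0 back into the
   equations for S and V gives matching lower bounds, uniformly in t
   (stability, with delta linear in eps) and eventually (attractivity). *)

Definition right_cont (x : R -> R) (T : R) : Prop :=
  filterlim x (at_right T) (locally (x T)).

Lemma right_cont_eps x T : right_cont x T -> forall e, 0 < e ->
  exists d, 0 < d /\ forall y, T < y < T + d -> Rabs (x y - x T) < e.
Proof.
  intros Hx e He.
  destruct (proj1 (filterlim_locally _ _) Hx (mkposreal e He)) as [d Hd].
  exists d; split; [apply cond_pos |].
  intros y Hy; apply (Hd y); [| lra].
  change (Rabs (y - T) < d); rewrite Rabs_right; lra.
Qed.

Lemma right_cont_of_continuous x T : continuous x T -> right_cont x T.
Proof.
  intros Hx; eapply filterlim_filter_le_1; [apply filter_le_within | exact Hx].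
Qed.

Lemma right_cont_of_derive x T l : is_derive x T l -> right_cont x T.
Proof.
  intros Hx; apply right_cont_of_continuous, (ex_derive_continuous (V := R_NormedModule)).
  now exists l.
Qed.

Lemma right_cont_opp x T : right_cont x T -> right_cont (fun s => - x s) T.
Proof.
  intros Hx; eapply filterlim_comp; [exact Hx | apply (filterlim_opp (V := R_NormedModule))].
Qed.

Lemma right_cont_shift_mult x u a T : right_cont x T -> continuous u T ->
  right_cont (fun s => (x s - a) * u s) T.
Proof.
  intros Hx Hu.
  assert (Hxa : right_cont (fun s => x s - a) T).
  { apply (filterlim_comp _ _ _ x (fun y => y - a) _ (locally (x T))); [exact Hx |].
    apply (ex_derive_continuous (fun y => y - a)); auto_derive; auto. }
  eapply filterlim_comp_2; [exact Hxa | exact (right_cont_of_continuous u T Hu) |].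
  apply (filterlim_mult (K := R_AbsRing)).
Qed.

Lemma right_cont_margin (g1 g2 : R -> R) (s0 a1 a2 c : R) : 0 <= c ->
  right_cont g1 s0 -> right_cont g2 s0 -> g1 s0 < a1 -> g2 s0 < a2 ->
  exists eta, 0 < eta /\ g1 (s0 + eta) < a1 /\ g2 (s0 + eta) + c * eta < a2.
Proof.
  intros Hc Hg1 Hg2 Ha1 Ha2.
  set (m2 := (a2 - g2 s0) / 2).
  destruct (right_cont_eps g1 s0 Hg1 (a1 - g1 s0)) as [d1 [Hd1 Hclose1]]; [lra |].
  destruct (right_cont_eps g2 s0 Hg2 m2) as [d2 [Hd2 Hclose2]]; [unfold m2; lra |].
  set (d3 := m2 / (c + 1)).
  assert (Hd3 : 0 < d3) by (unfold d3, m2; apply Rdiv_lt_0_compat; lra).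
  assert (Hcd3 : c * d3 < m2) by (assert (d3 * (c + 1) = m2) by (unfold d3; field; lra); nra).
  set (eta := Rmin d1 (Rmin d2 d3) / 2).
  assert (Rmin d1 (Rmin d2 d3) <= d1) by apply Rmin_l.
  assert (Rmin d1 (Rmin d2 d3) <= Rmin d2 d3) by apply Rmin_r.
  assert (Rmin d2 d3 <= d2) by apply Rmin_l.
  assert (Rmin d2 d3 <= d3) by apply Rmin_r.
  assert (0 < Rmin d1 (Rmin d2 d3)) by (repeat apply Rmin_glb_lt; assumption).
  exists eta; repeat split; [unfold eta; lra | |].
  - specialize (Hclose1 (s0 + eta) ltac:(unfold eta; lra)); apply Rabs_def2 in Hclose1; lra.
  - specialize (Hclose2 (s0 + eta) ltac:(unfold eta; lra)); apply Rabs_def2 in Hclose2.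
    assert (c * eta <= c * d3) by (apply Rmult_le_compat_l; [exact Hc | unfold eta; lra]).
    unfold m2 in *; lra.
Qed.

Lemma le_of_derive_nonpos (g dg : R -> R) a b : a <= b ->
  (forall x, a < x <= b -> is_derive g x (dg x) /\ dg x <= 0) ->
  right_cont g a -> g b <= g a.
Proof.
  intros Hab Hd Hg.
  destruct (Req_dec a b) as [<- | Hne]; [lra |].
  destruct (Rle_or_lt (g b) (g a)) as [Hle | Hlt]; [exact Hle | exfalso].
  destruct (right_cont_eps g a Hg ((g b - g a) / 2)) as [d [Hd0 Hclose]]; [lra |].
  set (x := a + Rmin d (b - a) / 2).
  assert (Hmd : Rmin d (b - a) <= d) by apply Rmin_l.
  assert (Hmb : Rmin d (b - a) <= b - a) by apply Rmin_r.
  assert (Hm0 : 0 < Rmin d (b - a)) by (apply Rmin_glb_lt; lra).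
  specialize (Hclose x ltac:(unfold x; lra)); apply Rabs_def2 in Hclose.
  destruct (MVT_gen g x b dg) as [c [Hc Hmvt]];
    rewrite Rmin_left, Rmax_right in * by (unfold x; lra).
  - intros y Hy; apply Hd; unfold x in *; lra.
  - intros y Hy; apply continuity_pt_filterlim, (ex_derive_continuous (V := R_NormedModule)).
    exists (dg y); apply Hd; unfold x in *; lra.
  - assert (dg c * (b - x) <= 0)
      by (apply Rmult_le_0_r; [apply Hd; unfold x in *; lra | unfold x; lra]).
    lra.
Qed.

Lemma diff_ineq_le_exp (x dx : R -> R) (T a b : R) : 0 < b ->
  (forall t, T < t -> is_derive x t (dx t) /\ dx t <= a - b * x t) ->
  right_cont x T ->
  forall t, T <= t -> x t <= a / b + (x T - a / b) * exp (- (b * (t - T))).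
Proof.
  intros Hb Hd Hx t Ht.
  set (E := fun s => exp (b * (s - T))).
  assert (HE : forall s, is_derive E s (b * E s)).
  { intros s; unfold E; auto_derive; [auto | unfold Rminus; ring]. }
  assert (Hg : (x t - a / b) * E t <= (x T - a / b) * E T).
  { apply (le_of_derive_nonpos (fun s => (x s - a / b) * E s)
      (fun s => dx s * E s + (x s - a / b) * (b * E s))); [exact Ht | |].
    - intros s Hs; destruct (Hd s (proj1 Hs)) as [Hxs Hdxs]; split.
      + assert (Hxa : is_derive (fun s => x s - a / b) s (dx s - 0)).
        { apply (is_derive_minus x (fun _ => a / b));
            [exact Hxs | apply (is_derive_const (V := R_NormedModule))]. }
        rewrite Rminus_0_r in Hxa.
        exact (is_derive_mult _ _ s _ _ Hxa (HE s) Rmult_comm).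
      + assert (0 < E s) by apply exp_pos.
        assert (b * (a / b) = a) by (field; lra).
        nra.
    - apply right_cont_shift_mult; [exact Hx |].
      apply (ex_derive_continuous E); eexists; apply HE. }
  assert (HET : E T = 1) by (unfold E; rewrite Rminus_diag, Rmult_0_r; apply exp_0).
  assert (HEt : E t * exp (- (b * (t - T))) = 1)
    by (unfold E; rewrite <- exp_plus, Rplus_opp_r; apply exp_0).
  assert (0 < exp (- (b * (t - T)))) by apply exp_pos.
  rewrite HET in Hg.
  apply (Rmult_le_compat_r (exp (- (b * (t - T))))) in Hg; [| lra].
  rewrite Rmult_assoc, HEt in Hg; lra.
Qed.

Lemma diff_ineq_le_max (x dx : R -> R) (T a b : R) : 0 < b ->
  (forall t, T < t -> is_derive x t (dx t) /\ dx t <= a - b * x t) ->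
  right_cont x T ->
  forall t, T <= t -> x t <= Rmax (x T) (a / b).
Proof.
  intros Hb Hd Hx t Ht.
  assert (Hexp := diff_ineq_le_exp x dx T a b Hb Hd Hx t Ht).
  assert (0 < exp (- (b * (t - T)))) by apply exp_pos.
  assert (exp (- (b * (t - T))) <= 1).
  { rewrite <- exp_0; destruct (Req_dec t T) as [-> | HtT].
    - rewrite Rminus_diag, Rmult_0_r, Ropp_0; lra.
    - left; apply exp_increasing.
      assert (0 < b * (t - T)) by (apply Rmult_lt_0_compat; lra); lra. }
  assert (x T <= Rmax (x T) (a / b)) by apply Rmax_l.
  assert (a / b <= Rmax (x T) (a / b)) by apply Rmax_r.
  destruct (Rle_or_lt (a / b) (x T)); nra.
Qed.

Lemma diff_ineq_ge_min (x dx : R -> R) (T a b : R) : 0 < b ->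
  (forall t, T < t -> is_derive x t (dx t) /\ a - b * x t <= dx t) ->
  right_cont x T ->
  forall t, T <= t -> Rmin (x T) (a / b) <= x t.
Proof.
  intros Hb Hd Hx t Ht.
  enough (- x t <= Rmax (- x T) (- a / b)) by (rewrite Rdiv_opp_l, Rmax_opp_Rmin in *; lra).
  apply (diff_ineq_le_max (fun s => - x s) (fun s => - dx s));
    [exact Hb | | apply right_cont_opp, Hx | exact Ht].
  intros s Hs; destruct (Hd s Hs); split; [apply (is_derive_opp x); assumption | lra].
Qed.

Lemma eventually_exp_decay (C b T e : R) : 0 < b -> 0 < e ->
  Rbar_locally p_infty (fun t => C * exp (- (b * (t - T))) < e).
Proof.
  intros Hb He; exists (T + Rabs C / (e * b)); intros t Ht.
  set (y := b * (t - T)).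
  assert (HC : 0 <= Rabs C) by apply Rabs_pos.
  assert (Hy : Rabs C < e * y).
  { unfold y; apply (Rmult_lt_compat_l (e * b)) in Ht; [| nra].
    replace (e * b * (T + Rabs C / (e * b))) with (e * b * T + Rabs C) in Ht by (field; lra).
    nra. }
  assert (Hexp : 1 + y <= exp y) by apply exp_ineq1_le.
  assert (Hinv : exp y * exp (- y) = 1) by (rewrite <- exp_plus, Rplus_opp_r; apply exp_0).
  assert (0 < exp (- y)) by apply exp_pos.
  assert (C * exp (- y) <= Rabs C * exp (- y))
    by (apply Rmult_le_compat_r; [lra | apply Rle_abs]).
  assert (Rabs C * exp (- y) < e * exp y * exp (- y)) by (apply Rmult_lt_compat_r; nra).
  rewrite Rmult_assoc, Hinv in *; lra.
Qed.

Lemma diff_ineq_eventually_le (x dx : R -> R) (a b : R) : 0 < b ->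
  (forall e, 0 < e -> Rbar_locally p_infty
     (fun t => is_derive x t (dx t) /\ dx t <= a + e - b * x t)) ->
  forall e, 0 < e -> Rbar_locally p_infty (fun t => x t <= a / b + e).
Proof.
  intros Hb Hd e He.
  destruct (Hd (b * e / 2) ltac:(nra)) as [M HM].
  set (a' := a + b * e / 2).
  assert (Hexp : forall t, M + 1 <= t ->
    x t <= a' / b + (x (M + 1) - a' / b) * exp (- (b * (t - (M + 1))))).
  { apply (diff_ineq_le_exp x dx); [exact Hb | intros t Ht; apply HM; lra |].
    apply (right_cont_of_derive _ _ (dx (M + 1))), HM; lra. }
  assert (Ha' : a' / b = a / b + e / 2) by (unfold a'; field; lra).
  apply (filter_imp (fun t => M + 1 < t /\
    (x (M + 1) - a' / b) * exp (- (b * (t - (M + 1)))) < e / 2)).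
  - intros t [Ht Hdecay]; specialize (Hexp t ltac:(lra)); lra.
  - apply filter_and; [now exists (M + 1) | apply eventually_exp_decay; lra].
Qed.

Lemma diff_ineq_eventually_ge (x dx : R -> R) (a b : R) : 0 < b ->
  (forall e, 0 < e -> Rbar_locally p_infty
     (fun t => is_derive x t (dx t) /\ a - e - b * x t <= dx t)) ->
  forall e, 0 < e -> Rbar_locally p_infty (fun t => a / b - e <= x t).
Proof.
  intros Hb Hd e He.
  apply (filter_imp (fun t => - x t <= - a / b + e)); [intros t; rewrite Rdiv_opp_l; lra |].
  apply (diff_ineq_eventually_le (fun t => - x t) (fun t => - dx t) (- a));
    [exact Hb | | exact He].
  intros e' He'; refine (filter_imp _ _ _ (Hd e' He')).
  intros t [Hxt Hdxt]; split; [apply (is_derive_opp x t (dx t) Hxt) | lra].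
Qed.

Lemma eventually_pos : Rbar_locally p_infty (fun t => 0 < t).
Proof. now exists 0. Qed.

Lemma lim_of_eventually_between (x : R -> R) (L : R) :
  (forall e, 0 < e -> Rbar_locally p_infty (fun t => x t <= L + e)) ->
  (forall e, 0 < e -> Rbar_locally p_infty (fun t => L - e <= x t)) ->
  filterlim x (Rbar_locally p_infty) (locally L).
Proof.
  intros Hup Hlo; apply filterlim_locally; intros e.
  assert (He : 0 < e / 2) by (generalize (cond_pos e); lra).
  refine (filter_imp _ _ _ (filter_and _ _ (Hup _ He) (Hlo _ He))).
  intros t [Hu Hl]; change (Rabs (x t - L) < e); apply Rabs_def1; lra.
Qed.

Lemma cont_quadrant_eps G x y : cont_quadrant G -> 0 <= x -> 0 <= y ->
  forall e, 0 < e -> exists d, 0 < d /\ forall x' y', 0 <= x' -> 0 <= y' ->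
    Rabs (x' - x) < d -> Rabs (y' - y) < d -> Rabs (G x' y' - G x y) < e.
Proof.
  intros HG Hx Hy e He.
  destruct (proj1 (filterlim_locally _ _) (HG x y Hx Hy) (mkposreal e He)) as [d Hd].
  exists d; split; [apply cond_pos |].
  intros x' y' Hx' Hy' Hdx Hdy; apply (Hd (x', y')); split; assumption.
Qed.

Lemma right_cont_partial_S G x y : cont_quadrant G -> 0 <= x -> 0 <= y ->
  right_cont (fun z => G z y) x.
Proof.
  intros HG Hx Hy; apply filterlim_locally; intros e.
  destruct (cont_quadrant_eps G x y HG Hx Hy e (cond_pos e)) as [d [Hd0 Hd]].
  exists (mkposreal d Hd0); intros z Hz Hxz; apply Hd; try assumption; [lra |].
  rewrite Rminus_diag, Rabs_R0; exact Hd0.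
Qed.

Lemma right_cont_partial_I G x y : cont_quadrant G -> 0 <= x -> 0 <= y ->
  right_cont (fun z => G x z) y.
Proof.
  intros HG Hx Hy; apply filterlim_locally; intros e.
  destruct (cont_quadrant_eps G x y HG Hx Hy e (cond_pos e)) as [d [Hd0 Hd]].
  exists (mkposreal d Hd0); intros z Hz Hyz; apply Hd; try assumption; [lra |].
  rewrite Rminus_diag, Rabs_R0; exact Hd0.
Qed.

Lemma is_dS_derive G x y d : is_dS G x y d -> 0 < x -> is_derive (fun z => G z y) x d.
Proof.
  intros HG Hx; apply is_derive_Reals; intros e He.
  destruct (proj1 (filterlim_locally _ _) HG (mkposreal e He)) as [del Hdel].
  assert (Hm : 0 < Rmin del x) by (apply Rmin_glb_lt; [apply cond_pos | lra]).
  exists (mkposreal _ Hm); intros h Hh Hhm; simpl in Hhm.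
  assert (Rmin del x <= del) by apply Rmin_l.
  assert (Rmin del x <= x) by apply Rmin_r.
  apply Rabs_def2 in Hhm as Hbounds.
  apply (Hdel h); [change (Rabs (h - 0) < del); rewrite Rminus_0_r |]; lra.
Qed.

Lemma is_dI_derive G x y d : is_dI G x y d -> 0 < y -> is_derive (fun z => G x z) y d.
Proof. exact (is_dS_derive (fun a b => G b a) y x d). Qed.

Lemma C2_quadrant_partials G : C2_quadrant G ->
  cont_quadrant G /\ exists dS dI : R -> R -> R, forall x y, 0 <= x -> 0 <= y ->
    is_dS G x y (dS x y) /\ is_dI G x y (dI x y).
Proof.
  intros [dS [dI [d11 [d12 [d21 [d22 [Hd [HG _]]]]]]]].
  split; [exact HG |]; exists dS, dI; intros x y Hx Hy.
  destruct (Hd x y Hx Hy) as [HdS [HdI _]]; now split.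
Qed.

Definition incidence_factor (F f : R -> R -> R) : Prop :=
  forall s i, 0 <= s -> 0 <= i -> F s i = i * f s i /\ 0 <= f s i.

Lemma H1_factor F f : H1 F f -> incidence_factor F f.
Proof.
  intros [_ [_ [Hf _]]] s i Hs Hi; destruct (Hf s i Hs Hi) as [? [_ ?]]; now split.
Qed.

Lemma incidence_ratio_le F f : H1 F f -> H2 f ->
  forall S S' I, 0 <= S -> S <= S' -> 0 <= I -> f S I <= f S' 0.
Proof.
  intros [_ [Hf _]] Hmono S S' I HS HSS' HI.
  destruct (C2_quadrant_partials f Hf) as [Hc [dS [dI Hd]]].
  apply Rle_trans with (f S 0).
  - apply (le_of_derive_nonpos (fun z => f S z) (fun z => dI S z)); [exact HI | |].
    + intros z [Hz _]; destruct (Hd S z HS (Rlt_le _ _ Hz)) as [_ HdI]; split.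
      * apply is_dI_derive; assumption.
      * apply (proj2 (Hmono S z HS (Rlt_le _ _ Hz))), HdI.
    + apply right_cont_partial_I; [exact Hc | lra | lra].
  - enough (- f S' 0 <= - f S 0) by lra.
    apply (le_of_derive_nonpos (fun z => - f z 0) (fun z => - dS z 0)); [exact HSS' | |].
    + intros z [Hz _]; destruct (Hd z 0 ltac:(lra) (Rle_refl 0)) as [HdS _]; split.
      * apply (is_derive_opp (fun z => f z 0)), is_dS_derive; [exact HdS | lra].
      * enough (0 < dS z 0) by lra.
        apply (proj1 (Hmono z 0 ltac:(lra) (Rle_refl 0))), HdS.
    + apply right_cont_opp, right_cont_partial_S; [exact Hc | lra | lra].
Qed.

Lemma is_dI_at_0_ratio F f s sig : H1 F f -> 0 <= s -> is_dI F s 0 sig -> sig = f s 0.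
Proof.
  intros HH1 Hs Hsig.
  destruct HH1 as [_ [Hf [HFf _]]].
  destruct (C2_quadrant_partials f Hf) as [Hc _].
  apply cond_eq; intros e He.
  destruct (proj1 (filterlim_locally _ _) Hsig (mkposreal (e / 2) ltac:(lra))) as [d1 Hd1].
  destruct (cont_quadrant_eps f s 0 Hc Hs (Rle_refl 0) (e / 2) ltac:(lra)) as [d2 [Hd2 Hclose]].
  set (h := Rmin d1 d2 / 2).
  assert (Hm : 0 < Rmin d1 d2) by (apply Rmin_glb_lt; [apply cond_pos | lra]).
  assert (Rmin d1 d2 <= d1) by apply Rmin_l.
  assert (Rmin d1 d2 <= d2) by apply Rmin_r.
  assert (Hh : 0 < h) by (unfold h; lra).
  assert (Hquot : (F s (0 + h) - F s 0) / h = f s h).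
  { rewrite Rplus_0_l, (proj1 (HFf s h Hs (Rlt_le _ _ Hh))), (proj1 (HFf s 0 Hs (Rle_refl 0))).
    field; lra. }
  assert (Hball : ball 0 d1 h)
    by (change (Rabs (h - 0) < d1); rewrite Rminus_0_r, Rabs_right; unfold h; lra).
  assert (Hdom : h <> 0 /\ 0 <= 0 + h) by (split; lra).
  specialize (Hd1 h Hball Hdom).
  change (Rabs ((F s (0 + h) - F s 0) / h - sig) < e / 2) in Hd1; rewrite Hquot in Hd1.
  specialize (Hclose s h Hs (Rlt_le _ _ Hh)).
  rewrite Rminus_diag, Rabs_R0, Rminus_0_r, Rabs_right in Hclose by lra.
  specialize (Hclose Hd2 ltac:(unfold h; lra)).
  apply Rabs_def2 in Hd1; apply Rabs_def2 in Hclose; apply Rabs_def1; lra.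
Qed.

Lemma incidence_nonneg F f : incidence_factor F f ->
  forall s i, 0 <= s -> 0 <= i -> 0 <= F s i.
Proof.
  intros Hf s i Hs Hi; destruct (Hf s i Hs Hi) as [-> ?]; now apply Rmult_le_pos.
Qed.

Lemma incidence_le F f smax Phi : incidence_factor F f ->
  (forall s i, 0 <= s -> s <= smax -> 0 <= i -> f s i <= Phi) ->
  forall s i, 0 <= s -> s <= smax -> 0 <= i -> F s i <= Phi * i.
Proof.
  intros Hf Hbound s i Hs Hsmax Hi; destruct (Hf s i Hs Hi) as [-> _].
  rewrite Rmult_comm; apply Rmult_le_compat_r; [exact Hi | now apply Hbound].
Qed.

Lemma dist4_lt_inv a b c d a' b' c' d' e : dist4 a b c d a' b' c' d' < e ->
  Rabs (a - a') < e /\ Rabs (b - b') < e /\ Rabs (c - c') < e /\ Rabs (d - d') < e.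
Proof.
  unfold dist4; intros H.
  apply Rmax_Rlt in H as [Hab Hcd].
  apply Rmax_Rlt in Hab as [? ?]; apply Rmax_Rlt in Hcd as [? ?].
  repeat split; assumption.
Qed.

Lemma dist4_le a b c d a' b' c' d' e :
  Rabs (a - a') <= e -> Rabs (b - b') <= e -> Rabs (c - c') <= e -> Rabs (d - d') <= e ->
  dist4 a b c d a' b' c' d' <= e.
Proof. intros; unfold dist4; repeat apply Rmax_lub; assumption. Qed.

Section Model.

Variables (Lam mu r k gam1 gam2 v1 v2 : R) (F1 f1 F2 f2 : R -> R -> R).
Hypotheses (Lam_pos : 0 < Lam) (mu_pos : 0 < mu) (r_pos : 0 < r) (k_pos : 0 < k).
Hypotheses (F1_factor : incidence_factor F1 f1) (F2_factor : incidence_factor F2 f2).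

Local Notation S0 := (Lam / (r + mu)).
Local Notation V0 := (r * S0 / mu).

Variables (eta Phi1 Phi2 : R).
Hypothesis eta_pos : 0 < eta.
Hypothesis f1_bound : forall s i, 0 <= s -> s <= S0 + eta -> 0 <= i -> f1 s i <= Phi1.
Hypothesis f2_bound : forall s i, 0 <= s -> s <= S0 + eta -> 0 <= i -> f2 s i <= Phi2.

(* Vmax is the bound of [V_le_near] for d = eta: it bounds V along every
   solution that starts within eta of E0. *)
Local Notation Vmax := (V0 + (r / mu + 1) * eta).
Local Notation S_gain := ((Phi1 + Phi2) / (r + mu)).
Local Notation V_gain := ((r * (1 + S_gain) + k * Vmax) / mu).
Local Notation near_gain := (1 + r / mu + S_gain + V_gain).

Hypothesis margin1 : Phi1 < gam1 + v1 + mu.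
Hypothesis margin2 : Phi2 + k * Vmax < gam2 + v2 + mu.

Lemma S0_pos : 0 < S0.
Proof. apply Rdiv_lt_0_compat; lra. Qed.

Lemma V0_pos : 0 < V0.
Proof. assert (0 < S0) by exact S0_pos; apply Rdiv_lt_0_compat; nra. Qed.

Lemma r_div_mu_pos : 0 < r / mu.
Proof. apply Rdiv_lt_0_compat; lra. Qed.

Lemma Phi_nonneg : 0 <= Phi1 /\ 0 <= Phi2.
Proof.
  assert (0 < S0) by exact S0_pos.
  split; [apply Rle_trans with (f1 S0 0); [apply F1_factor | apply f1_bound] |
          apply Rle_trans with (f2 S0 0); [apply F2_factor | apply f2_bound]]; lra.
Qed.

Lemma gains_nonneg : 0 <= S_gain /\ 0 <= V_gain.
Proof.
  destruct Phi_nonneg as [HPhi1 HPhi2].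
  assert (HSg : 0 <= S_gain) by (apply Rdiv_le_0_compat; lra).
  assert (0 < V0) by exact V0_pos.
  assert (Hrmu := r_div_mu_pos).
  assert (0 < Vmax) by nra.
  split; [exact HSg | apply Rdiv_le_0_compat; [| exact mu_pos]].
  apply Rplus_le_le_0_compat; apply Rmult_le_pos; lra.
Qed.

Section Solution.

Variables S V I1 I2 : R -> R.
Hypothesis sol : is_solution Lam mu r k gam1 gam2 v1 v2 F1 F2 S V I1 I2.

Let dS t := Lam - F1 (S t) (I1 t) - F2 (S t) (I2 t) - (r + mu) * S t.
Let dV t := r * S t - (mu + k * I2 t) * V t.
Let dI1 t := F1 (S t) (I1 t) - (gam1 + v1 + mu) * I1 t.
Let dI2 t := F2 (S t) (I2 t) + k * I2 t * V t - (gam2 + v2 + mu) * I2 t.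

Lemma sol_nonneg t : 0 <= t -> 0 <= S t /\ 0 <= V t /\ 0 <= I1 t /\ 0 <= I2 t.
Proof. exact (proj1 sol t). Qed.

Lemma sol_derive t : 0 < t ->
  is_derive S t (dS t) /\ is_derive V t (dV t) /\ is_derive I1 t (dI1 t) /\ is_derive I2 t (dI2 t).
Proof. exact (proj1 (proj2 sol) t). Qed.

Lemma sol_right_cont : right_cont S 0 /\ right_cont V 0 /\ right_cont I1 0 /\ right_cont I2 0.
Proof. exact (proj2 (proj2 sol)). Qed.

Lemma dS_le t : 0 < t -> dS t <= Lam - (r + mu) * S t.
Proof.
  intros Ht; destruct (sol_nonneg t ltac:(lra)) as [HS [_ [HI1 HI2]]].
  assert (0 <= F1 (S t) (I1 t)) by now apply (incidence_nonneg F1 f1).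
  assert (0 <= F2 (S t) (I2 t)) by now apply (incidence_nonneg F2 f2).
  unfold dS; lra.
Qed.

Lemma dS_ge t : 0 < t -> S t <= S0 + eta ->
  Lam - (Phi1 * I1 t + Phi2 * I2 t) - (r + mu) * S t <= dS t.
Proof.
  intros Ht Hsmax; destruct (sol_nonneg t ltac:(lra)) as [HS [_ [HI1 HI2]]].
  assert (F1 (S t) (I1 t) <= Phi1 * I1 t) by now apply (incidence_le F1 f1 (S0 + eta)).
  assert (F2 (S t) (I2 t) <= Phi2 * I2 t) by now apply (incidence_le F2 f2 (S0 + eta)).
  unfold dS; lra.
Qed.

Lemma dV_le t : 0 < t -> dV t <= r * S t - mu * V t.
Proof.
  intros Ht; destruct (sol_nonneg t ltac:(lra)) as [_ [HV [_ HI2]]].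
  assert (0 <= k * I2 t * V t) by (apply Rmult_le_pos; [apply Rmult_le_pos |]; lra).
  unfold dV; lra.
Qed.

Lemma dI1_le t : 0 < t -> S t <= S0 + eta ->
  dI1 t <= - (gam1 + v1 + mu - Phi1) * I1 t.
Proof.
  intros Ht Hsmax; destruct (sol_nonneg t ltac:(lra)) as [HS [_ [HI1 _]]].
  assert (F1 (S t) (I1 t) <= Phi1 * I1 t) by now apply (incidence_le F1 f1 (S0 + eta)).
  unfold dI1; lra.
Qed.

Lemma dI2_le t : 0 < t -> S t <= S0 + eta -> V t <= Vmax ->
  dI2 t <= - (gam2 + v2 + mu - Phi2 - k * Vmax) * I2 t.
Proof.
  intros Ht Hsmax Hvmax; destruct (sol_nonneg t ltac:(lra)) as [HS [_ [_ HI2]]].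
  assert (F2 (S t) (I2 t) <= Phi2 * I2 t) by now apply (incidence_le F2 f2 (S0 + eta)).
  assert (k * I2 t * V t <= k * I2 t * Vmax) by (apply Rmult_le_compat_l; [nra | exact Hvmax]).
  unfold dI2; nra.
Qed.

Section Near.

Variable d : R.
Hypotheses (d_pos : 0 < d) (d_le_eta : d <= eta).
Hypothesis init_near : dist4 (S 0) (V 0) (I1 0) (I2 0) S0 V0 0 0 < d.

Lemma init_bounds : S0 - d < S 0 < S0 + d /\ V0 - d < V 0 < V0 + d /\ I1 0 < d /\ I2 0 < d.
Proof.
  destruct (dist4_lt_inv _ _ _ _ _ _ _ _ _ init_near) as [HS [HV [HI1 HI2]]].
  rewrite Rminus_0_r in HI1, HI2.
  apply Rabs_def2 in HS, HV, HI1, HI2; lra.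
Qed.

Lemma S_le_near t : 0 <= t -> S t <= S0 + d.
Proof.
  intros Ht; destruct init_bounds as [HS0 _].
  assert (HS := diff_ineq_le_max S dS 0 Lam (r + mu) ltac:(lra)
    (fun u Hu => conj (proj1 (sol_derive u Hu)) (dS_le u Hu)) (proj1 sol_right_cont) t Ht).
  assert (Rmax (S 0) S0 <= S0 + d) by (apply Rmax_lub; lra); lra.
Qed.

Lemma S_le_eta t : 0 < t -> S t <= S0 + eta.
Proof. intros Ht; assert (S t <= S0 + d) by (apply S_le_near; lra); lra. Qed.

Lemma V_le_near t : 0 <= t -> V t <= V0 + (r / mu + 1) * d.
Proof.
  intros Ht; destruct init_bounds as [_ [HV0 _]].
  assert (H : V t <= Rmax (V 0) (r * (S0 + d) / mu)).
  { apply (diff_ineq_le_max V dV); [exact mu_pos | | apply sol_right_cont | exact Ht].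
    intros u Hu; split; [apply sol_derive, Hu |].
    assert (S u <= S0 + d) by (apply S_le_near; lra).
    assert (dV u <= r * S u - mu * V u) by (apply dV_le, Hu); nra. }
  replace (r * (S0 + d) / mu) with (V0 + r / mu * d) in H by (field; lra).
  assert (Hrmu := r_div_mu_pos).
  assert (Rmax (V 0) (V0 + r / mu * d) <= V0 + (r / mu + 1) * d)
    by (apply Rmax_lub; nra); lra.
Qed.

Lemma V_le_Vmax t : 0 < t -> V t <= Vmax.
Proof.
  intros Ht; assert (V t <= V0 + (r / mu + 1) * d) by (apply V_le_near; lra).
  assert (Hrmu := r_div_mu_pos); nra.
Qed.

Lemma I1_le_near t : 0 <= t -> I1 t <= d.
Proof.
  intros Ht; destruct init_bounds as [_ [_ [HI10 _]]].
  assert (H : I1 t <= Rmax (I1 0) (0 / (gam1 + v1 + mu - Phi1))).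
  { apply (diff_ineq_le_max I1 dI1); [lra | | apply sol_right_cont | exact Ht].
    intros u Hu; split; [apply sol_derive, Hu |].
    assert (dI1 u <= - (gam1 + v1 + mu - Phi1) * I1 u)
      by (apply dI1_le, S_le_eta; exact Hu); lra. }
  rewrite Rdiv_0_l in H; assert (Rmax (I1 0) 0 <= d) by (apply Rmax_lub; lra); lra.
Qed.

Lemma I2_le_near t : 0 <= t -> I2 t <= d.
Proof.
  intros Ht; destruct init_bounds as [_ [_ [_ HI20]]].
  assert (H : I2 t <= Rmax (I2 0) (0 / (gam2 + v2 + mu - Phi2 - k * Vmax))).
  { apply (diff_ineq_le_max I2 dI2); [lra | | apply sol_right_cont | exact Ht].
    intros u Hu; split; [apply sol_derive, Hu |].
    assert (dI2 u <= - (gam2 + v2 + mu - Phi2 - k * Vmax) * I2 u)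
      by (apply dI2_le; [exact Hu | apply S_le_eta, Hu | apply V_le_Vmax, Hu]); lra. }
  rewrite Rdiv_0_l in H; assert (Rmax (I2 0) 0 <= d) by (apply Rmax_lub; lra); lra.
Qed.

Lemma S_ge_near t : 0 <= t -> S0 - (1 + S_gain) * d <= S t.
Proof.
  intros Ht; destruct init_bounds as [HS0 _]; destruct Phi_nonneg as [HPhi1 HPhi2].
  assert (H : Rmin (S 0) ((Lam - d * (Phi1 + Phi2)) / (r + mu)) <= S t).
  { apply (diff_ineq_ge_min S dS); [lra | | apply sol_right_cont | exact Ht].
    intros u Hu; split; [apply sol_derive, Hu |].
    assert (I1 u <= d) by (apply I1_le_near; lra).
    assert (I2 u <= d) by (apply I2_le_near; lra).
    assert (Lam - (Phi1 * I1 u + Phi2 * I2 u) - (r + mu) * S u <= dS u)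
      by (apply dS_ge, S_le_eta; exact Hu); nra. }
  replace ((Lam - d * (Phi1 + Phi2)) / (r + mu)) with (S0 - S_gain * d) in H by (field; lra).
  assert (0 <= S_gain) by apply gains_nonneg.
  assert (S0 - (1 + S_gain) * d <= Rmin (S 0) (S0 - S_gain * d))
    by (apply Rmin_glb; nra); lra.
Qed.

Lemma V_ge_near t : 0 <= t -> V0 - (1 + V_gain) * d <= V t.
Proof.
  intros Ht; destruct init_bounds as [_ [HV0 _]].
  assert (H : Rmin (V 0) ((r * (S0 - (1 + S_gain) * d) - k * d * Vmax) / mu) <= V t).
  { apply (diff_ineq_ge_min V dV); [lra | | apply sol_right_cont | exact Ht].
    intros u Hu; split; [apply sol_derive, Hu |].
    assert (S0 - (1 + S_gain) * d <= S u) by (apply S_ge_near; lra).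
    assert (I2 u <= d) by (apply I2_le_near; lra).
    assert (V u <= Vmax) by (apply V_le_Vmax, Hu).
    destruct (sol_nonneg u ltac:(lra)) as [_ [HV [_ HI2]]].
    assert (k * I2 u * V u <= k * d * Vmax)
      by (rewrite !Rmult_assoc; apply Rmult_le_compat_l; [lra | now apply Rmult_le_compat]).
    unfold dV; nra. }
  replace ((r * (S0 - (1 + S_gain) * d) - k * d * Vmax) / mu) with (V0 - V_gain * d) in H
    by (field; lra).
  assert (0 <= V_gain) by apply gains_nonneg.
  assert (V0 - (1 + V_gain) * d <= Rmin (V 0) (V0 - V_gain * d))
    by (apply Rmin_glb; nra); lra.
Qed.

Lemma dist4_near t : 0 <= t ->
  dist4 (S t) (V t) (I1 t) (I2 t) S0 V0 0 0 <= near_gain * d.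
Proof.
  intros Ht; destruct gains_nonneg as [HSg HVg].
  assert (Hrmu := r_div_mu_pos).
  destruct (sol_nonneg t Ht) as [_ [_ [HI1 HI2]]].
  assert (S t <= S0 + d) by now apply S_le_near.
  assert (S0 - (1 + S_gain) * d <= S t) by now apply S_ge_near.
  assert (V t <= V0 + (r / mu + 1) * d) by now apply V_le_near.
  assert (V0 - (1 + V_gain) * d <= V t) by now apply V_ge_near.
  assert (I1 t <= d) by now apply I1_le_near.
  assert (I2 t <= d) by now apply I2_le_near.
  apply dist4_le; apply Rabs_le; nra.
Qed.

End Near.

Lemma S_eventually_le e : 0 < e -> Rbar_locally p_infty (fun t => S t <= S0 + e).
Proof.
  apply (diff_ineq_eventually_le S dS); [lra |]; intros e' He'.
  refine (filter_imp _ _ _ eventually_pos); intros t Ht.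
  split; [apply sol_derive, Ht | assert (HdS := dS_le t Ht); lra].
Qed.

Lemma V_eventually_le e : 0 < e -> Rbar_locally p_infty (fun t => V t <= V0 + e).
Proof.
  apply (diff_ineq_eventually_le V dV); [lra |]; intros e' He'.
  assert (Her : 0 < e' / r) by (apply Rdiv_lt_0_compat; lra).
  refine (filter_imp _ _ _ (filter_and _ _ eventually_pos (S_eventually_le _ Her))).
  intros t [Ht HS]; split; [apply sol_derive, Ht |].
  assert (r * S t <= r * S0 + e')
    by (replace (r * S0 + e') with (r * (S0 + e' / r)) by (field; lra); nra).
  assert (HdV := dV_le t Ht); lra.
Qed.

Lemma I1_eventually_le e : 0 < e -> Rbar_locally p_infty (fun t => I1 t <= e).
Proof.
  intros He; refine (filter_imp _ _ _
    (diff_ineq_eventually_le I1 dI1 0 (gam1 + v1 + mu - Phi1) _ _ e He)).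
  - intros t; rewrite Rdiv_0_l; lra.
  - lra.
  - intros e' He'.
    refine (filter_imp _ _ _ (filter_and _ _ eventually_pos (S_eventually_le _ eta_pos))).
    intros t [Ht HS]; split; [apply sol_derive, Ht | assert (HdI1 := dI1_le t Ht HS); lra].
Qed.

Lemma I2_eventually_le e : 0 < e -> Rbar_locally p_infty (fun t => I2 t <= e).
Proof.
  intros He; refine (filter_imp _ _ _
    (diff_ineq_eventually_le I2 dI2 0 (gam2 + v2 + mu - Phi2 - k * Vmax) _ _ e He)).
  - intros t; rewrite Rdiv_0_l; lra.
  - lra.
  - intros e' He'.
    assert (Hv : 0 < (r / mu + 1) * eta) by (assert (Hrmu := r_div_mu_pos); nra).
    refine (filter_imp _ _ _ (filter_and _ _ eventually_pos
      (filter_and _ _ (S_eventually_le _ eta_pos) (V_eventually_le _ Hv)))).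
    intros t [Ht [HS HV]]; split; [apply sol_derive, Ht | assert (HdI2 := dI2_le t Ht HS HV); lra].
Qed.

Lemma S_eventually_ge e : 0 < e -> Rbar_locally p_infty (fun t => S0 - e <= S t).
Proof.
  destruct Phi_nonneg as [HPhi1 HPhi2].
  apply (diff_ineq_eventually_ge S dS); [lra |]; intros e' He'.
  set (q := e' / (Phi1 + Phi2 + 1)).
  assert (Hq : 0 < q) by (apply Rdiv_lt_0_compat; lra).
  assert (Hqe : q * (Phi1 + Phi2) <= e').
  { assert (q * (Phi1 + Phi2 + 1) = e') by (unfold q; field; lra); nra. }
  refine (filter_imp _ _ _ (filter_and _ _ eventually_pos
    (filter_and _ _ (S_eventually_le _ eta_pos)
    (filter_and _ _ (I1_eventually_le _ Hq) (I2_eventually_le _ Hq))))).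
  intros t [Ht [HS [HI1 HI2]]]; split; [apply sol_derive, Ht |].
  assert (HdS := dS_ge t Ht HS); nra.
Qed.

Lemma V_eventually_ge e : 0 < e -> Rbar_locally p_infty (fun t => V0 - e <= V t).
Proof.
  assert (HV0 := V0_pos).
  apply (diff_ineq_eventually_ge V dV); [lra |]; intros e' He'.
  set (q := e' / (2 * k * (V0 + 1))).
  assert (Hq : 0 < q) by (apply Rdiv_lt_0_compat; nra).
  assert (Hqe : k * q * (V0 + 1) = e' / 2) by (unfold q; field; repeat split; nra).
  assert (Her : 0 < e' / (2 * r)) by (apply Rdiv_lt_0_compat; lra).
  refine (filter_imp _ _ _ (filter_and _ _ eventually_pos
    (filter_and _ _ (S_eventually_ge _ Her)
    (filter_and _ _ (V_eventually_le _ Rlt_0_1) (I2_eventually_le _ Hq))))).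
  intros t [Ht [HS [HV HI2]]]; split; [apply sol_derive, Ht |].
  destruct (sol_nonneg t ltac:(lra)) as [_ [HVt [_ HI2t]]].
  assert (r * (S0 - e' / (2 * r)) <= r * S t) by (apply Rmult_le_compat_l; lra).
  replace (r * (S0 - e' / (2 * r))) with (r * S0 - e' / 2) in * by (field; lra).
  assert (k * I2 t * V t <= k * q * (V0 + 1)).
  { rewrite !Rmult_assoc; apply Rmult_le_compat_l; [lra | now apply Rmult_le_compat]. }
  unfold dV; nra.
Qed.

Lemma dfe_attractive :
  filterlim S (Rbar_locally p_infty) (locally S0) /\
  filterlim V (Rbar_locally p_infty) (locally V0) /\
  filterlim I1 (Rbar_locally p_infty) (locally 0) /\
  filterlim I2 (Rbar_locally p_infty) (locally 0).
Proof.
  assert (Hlo : forall x, (forall t, 0 <= t -> 0 <= x t) ->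
    forall e, 0 < e -> Rbar_locally p_infty (fun t => 0 - e <= x t)).
  { intros x Hx e He; refine (filter_imp _ _ _ eventually_pos); intros t Ht.
    assert (0 <= x t) by (apply Hx; lra); lra. }
  repeat split; apply lim_of_eventually_between.
  all: try solve [apply S_eventually_le | apply S_eventually_ge |
                  apply V_eventually_le | apply V_eventually_ge].
  - intros e He; refine (filter_imp _ _ _ (I1_eventually_le e He)); intros t; lra.
  - apply Hlo; intros t Ht; apply (sol_nonneg t Ht).
  - intros e He; refine (filter_imp _ _ _ (I2_eventually_le e He)); intros t; lra.
  - apply Hlo; intros t Ht; apply (sol_nonneg t Ht).
Qed.

End Solution.

Lemma dfe_stable eps : 0 < eps -> exists delta, 0 < delta /\
  forall S V I1 I2, is_solution Lam mu r k gam1 gam2 v1 v2 F1 F2 S V I1 I2 ->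
    dist4 (S 0) (V 0) (I1 0) (I2 0) S0 V0 0 0 < delta ->
    forall t, 0 <= t -> dist4 (S t) (V t) (I1 t) (I2 t) S0 V0 0 0 < eps.
Proof.
  intros Heps; destruct gains_nonneg as [HSg HVg].
  assert (Hrmu := r_div_mu_pos).
  assert (Hm : 0 < Rmin eps eta) by (apply Rmin_glb_lt; lra).
  assert (Rmin eps eta <= eps) by apply Rmin_l.
  assert (Rmin eps eta <= eta) by apply Rmin_r.
  assert (Hgain : 1 <= near_gain) by lra.
  set (K := near_gain) in *.
  set (d := Rmin eps eta / (2 * K)).
  assert (Hd : d * K = Rmin eps eta / 2) by (unfold d; field; lra).
  assert (Hd0 : 0 < d) by (unfold d; apply Rdiv_lt_0_compat; lra).
  exists d; split; [exact Hd0 |]; intros S V I1 I2 sol Hinit t Ht.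
  assert (d <= eta) by (assert (d <= d * K) by nra; lra).
  assert (Hnear : dist4 (S t) (V t) (I1 t) (I2 t) S0 V0 0 0 <= K * d)
    by exact (dist4_near S V I1 I2 sol d Hd0 ltac:(assumption) Hinit t Ht).
  lra.
Qed.

Lemma dfe_stable_attractive :
  (forall eps, 0 < eps -> exists delta, 0 < delta /\
     forall S V I1 I2, is_solution Lam mu r k gam1 gam2 v1 v2 F1 F2 S V I1 I2 ->
       dist4 (S 0) (V 0) (I1 0) (I2 0) S0 V0 0 0 < delta ->
       forall t, 0 <= t -> dist4 (S t) (V t) (I1 t) (I2 t) S0 V0 0 0 < eps) /\
  (forall S V I1 I2, is_solution Lam mu r k gam1 gam2 v1 v2 F1 F2 S V I1 I2 ->
     filterlim S (Rbar_locally p_infty) (locally S0) /\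
     filterlim V (Rbar_locally p_infty) (locally V0) /\
     filterlim I1 (Rbar_locally p_infty) (locally 0) /\
     filterlim I2 (Rbar_locally p_infty) (locally 0)).
Proof. split; [exact dfe_stable | exact dfe_attractive]. Qed.

End Model.

Lemma R0_lt_1_margins (Lam mu r k a1 a2 sigma1 sigma2 : R) :
  0 < mu -> 0 < r + mu -> 0 < a1 -> 0 < a2 ->
  Rmax (sigma1 / a1) (sigma2 / a2 + k * r * Lam / (a2 * mu * (r + mu))) < 1 ->
  sigma1 < a1 /\ sigma2 + k * (r * (Lam / (r + mu)) / mu) < a2.
Proof.
  intros Hmu Hl Ha1 Ha2 HR0; apply Rmax_Rlt in HR0 as [HR1 HR2].
  split.
  - apply (Rmult_lt_compat_r a1) in HR1; [| exact Ha1].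
    replace (sigma1 / a1 * a1) with sigma1 in HR1 by (field; lra); lra.
  - apply (Rmult_lt_compat_r a2) in HR2; [| exact Ha2].
    replace ((sigma2 / a2 + k * r * Lam / (a2 * mu * (r + mu))) * a2)
      with (sigma2 + k * (r * (Lam / (r + mu)) / mu)) in HR2 by (field; lra); lra.
Qed.

Lemma H1_right_cont_ratio F f s : H1 F f -> 0 <= s -> right_cont (fun z => f z 0) s.
Proof.
  intros [_ [Hf _]] Hs.
  apply right_cont_partial_S; [apply (C2_quadrant_partials f Hf) | exact Hs | lra].
Qed.

Lemma dfe_equilibrium (Lam mu r k gam1 gam2 v1 v2 : R) (F1 f1 F2 f2 : R -> R -> R) :
  0 < Lam -> 0 < mu -> 0 < r -> H1 F1 f1 -> H1 F2 f2 ->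
  Lam - F1 (Lam / (r + mu)) 0 - F2 (Lam / (r + mu)) 0 - (r + mu) * (Lam / (r + mu)) = 0 /\
  r * (Lam / (r + mu)) - (mu + k * 0) * (r * (Lam / (r + mu)) / mu) = 0 /\
  F1 (Lam / (r + mu)) 0 - (gam1 + v1 + mu) * 0 = 0 /\
  F2 (Lam / (r + mu)) 0 + k * 0 * (r * (Lam / (r + mu)) / mu) - (gam2 + v2 + mu) * 0 = 0.
Proof.
  intros HLam Hmu Hr [_ [_ [_ [_ HF1]]]] [_ [_ [_ [_ HF2]]]].
  assert (0 <= Lam / (r + mu)) by (apply Rlt_le, Rdiv_lt_0_compat; lra).
  rewrite HF1, HF2 by assumption; repeat split; field; lra.
Qed.

Theorem mainTheorem12
  (F1 f1 F2 f2 : R -> R -> R)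
  (Lam mu r k gam1 gam2 v1 v2 sigma1 sigma2 : R) :
  0 < Lam -> 0 < mu -> 0 < r -> 0 < k -> 0 < gam1 -> 0 < gam2 ->
  0 <= v1 -> 0 <= v2 ->
  H1 F1 f1 -> H2 f1 -> H3 F1 ->
  H1 F2 f2 -> H2 f2 -> H3 F2 ->
  is_dI F1 (Lam / (r + mu)) 0 sigma1 ->
  is_dI F2 (Lam / (r + mu)) 0 sigma2 ->
  Rmax (sigma1 / (gam1 + v1 + mu))
       (sigma2 / (gam2 + v2 + mu)
        + k * r * Lam / ((gam2 + v2 + mu) * mu * (r + mu))) < 1 ->
  GAS Lam mu r k gam1 gam2 v1 v2 F1 F2
      (Lam / (r + mu)) (r * Lam / (mu * (r + mu))) 0 0.
Proof.
  intros HLam Hmu Hr Hk Hg1 Hg2 Hv1 Hv2 HF1 Hf1 _ HF2 Hf2 _ Hsigma1 Hsigma2 HR0.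
  assert (HS0 : 0 <= Lam / (r + mu)) by (apply Rlt_le, Rdiv_lt_0_compat; lra).
  assert (Hrmu : 0 < r / mu) by (apply Rdiv_lt_0_compat; lra).
  destruct (R0_lt_1_margins Lam mu r k (gam1 + v1 + mu) (gam2 + v2 + mu) sigma1 sigma2)
    as [HR1 HR2]; [lra .. | exact HR0 |].
  rewrite (is_dI_at_0_ratio F1 f1 _ _ HF1 HS0 Hsigma1) in HR1.
  rewrite (is_dI_at_0_ratio F2 f2 _ _ HF2 HS0 Hsigma2) in HR2.
  destruct (right_cont_margin (fun s => f1 s 0) (fun s => f2 s 0) (Lam / (r + mu))
    (gam1 + v1 + mu) (gam2 + v2 + mu - k * (r * (Lam / (r + mu)) / mu)) (k * (r / mu + 1)))
    as [eta [Heta [Hmargin1 Hmargin2]]];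
    [nra | now apply (H1_right_cont_ratio F1) | now apply (H1_right_cont_ratio F2) | lra .. |].
  cbv beta in Hmargin1, Hmargin2.
  replace (r * Lam / (mu * (r + mu))) with (r * (Lam / (r + mu)) / mu) by (field; lra).
  split; [now apply (dfe_equilibrium Lam mu r k gam1 gam2 v1 v2 F1 f1 F2 f2) |].
  apply (dfe_stable_attractive Lam mu r k gam1 gam2 v1 v2 F1 f1 F2 f2 HLam Hmu Hr Hk
    (H1_factor F1 f1 HF1) (H1_factor F2 f2 HF2)
    eta (f1 (Lam / (r + mu) + eta) 0) (f2 (Lam / (r + mu) + eta) 0)); [exact Heta | | | lra ..].
  - intros s i Hs Hsmax Hi; apply (incidence_ratio_le F1 f1 HF1 Hf1); lra.
  - intros s i Hs Hsmax Hi; apply (incidence_ratio_le F2 f2 HF2 Hf2); lra.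
Qed.
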